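(* Let $A$ be a commutative ring and $\sigma$ a hereditary torsion theory on $A$-modules. If $A$ is totally $\sigma$-artinian, then every finitely generated $A$-module is totally $\sigma$-artinian.
   Context: $\mathcal{L}(\sigma)$ is the Gabriel filter of $\sigma$. An $A$-module $M$ is totally $\sigma$-artinian if for every descending chain of submodules $N_1\supseteq N_2\supseteq\cdots$ there exist $m$ and $\mathfrak{h}\in\mathcal{L}(\sigma)$ with $N_m\mathfrak{h}\subseteq N_s$ for all $s\ge m$; the ring $A$ is totally $\sigma$-artinian if $A$ is so as an $A$-module. *)

From mathcomp Require Import all_boot all_order all_algebra.
Set Implicit Arguments. Unset Strict Implicit. Unset Printing Implicit Defensive.
Import GRing.Theory.
Local Open Scope ring_scope.

Definition is_ideal (R : comPzRingType) (I : R -> Prop) : Prop :=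
  [/\ I 0, (forall x y, I x -> I y -> I (x - y)) & (forall a x, I x -> I (a * x))].

Definition colon (R : comPzRingType) (I : R -> Prop) (a : R) : R -> Prop :=
  fun r => I (r * a).

Definition gabriel_filter (R : comPzRingType) (F : (R -> Prop) -> Prop) : Prop :=
  [/\ (forall I, F I -> is_ideal I),
      F (fun _ => True),
      (forall I J, F I -> is_ideal J -> (forall x, I x -> J x) -> F J),
      (forall I a, F I -> F (colon I a))
    & (forall I J, F I -> is_ideal J -> (forall a, I a -> F (colon J a)) -> F J)].

(* A hereditary torsion theory sigma on A-modules, represented by its Gabriel
   filter L(sigma) (the bijective correspondence of Stenström VI.5). *)
Record htt (R : comPzRingType) := Htt {
  Lsigma : (R -> Prop) -> Prop;
  Lsigma_gabriel : gabriel_filter Lsigma }.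

Definition is_submodule (R : comPzRingType) (M : lmodType R) (N : M -> Prop) : Prop :=
  [/\ N 0, (forall x y, N x -> N y -> N (x - y)) & (forall (a : R) x, N x -> N (a *: x))].

(* N h ⊆ N' : the submodule generated by products a x (x in N, a in h) lies in N'. *)
Definition mul_sub (R : comPzRingType) (M : lmodType R) (N : M -> Prop)
  (h : R -> Prop) (N' : M -> Prop) : Prop :=
  forall x a, N x -> h a -> N' (a *: x).

Definition totally_sigma_artinian (R : comPzRingType) (sigma : htt R)
  (M : lmodType R) : Prop :=
  forall N : nat -> M -> Prop,
    (forall k, is_submodule (N k)) ->
    (forall k x, N k.+1 x -> N k x) ->
    exists m : nat, exists2 h : R -> Prop, Lsigma sigma h &
      forall s, (m <= s)%N -> mul_sub (N m) h (N s).

Definition totally_sigma_artinian_ring (R : comPzRingType) (sigma : htt R) : Prop :=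
  totally_sigma_artinian sigma R^o.

Definition finitely_generated (R : comPzRingType) (M : lmodType R) : Prop :=
  exists s : seq M, forall x : M,
    exists c : 'I_(size s) -> R, x = \sum_(i < size s) c i *: s`_i.

From mathcomp Require Import all_boot all_order all_algebra.
Set Implicit Arguments. Unset Strict Implicit. Unset Printing Implicit Defensive.
Import GRing.Theory.
Local Open Scope ring_scope.

(* Fix generators s_0, ..., s_{k-1} of M and argue by
   induction on n that every descending chain of submodules contained in the
   span of s_0, ..., s_{n-1} totally sigma-stabilizes.  The inductive step is
   a general extension lemma: let P be a submodule, x0 an element, and N a
   descending chain inside P + A x0.  The chain splits into
     - its trace N k /\ P on P, and
     - its coefficient chain { c in A | p + c x0 in N k for some p in P },
   a descending chain of ideals of A.  If the trace stabilizes with a filter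
   ideal h1 from step m1 on, and the coefficient chain (which stabilizes
   because A is totally sigma-artinian) with h2 from step m2 on, then every
   product r b (r in h2, b in h1) multiplies N m into N t for t >= m =
   max m1 m2.  Hence the ideal of all such multipliers contains the colon
   ideals needed by the Gabriel axiom, so it lies in L(sigma). *)

Definition stabilizes (R : comPzRingType) (sigma : htt R) (M : lmodType R)
    (N : nat -> M -> Prop) : Prop :=
  exists m : nat, exists2 h : R -> Prop, Lsigma sigma h &
    forall s, (m <= s)%N -> mul_sub (N m) h (N s).

Definition stab_ideal (R : comPzRingType) (M : lmodType R)
    (N : nat -> M -> Prop) (m : nat) : R -> Prop :=
  fun r => forall t, (m <= t)%N -> forall y, N m y -> N t (r *: y).

Definition span_prefix (R : comPzRingType) (M : lmodType R) (s : seq M) n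
    (y : M) : Prop :=
  exists c : 'I_n -> R, y = \sum_(i < n) c i *: s`_i.

Lemma submoduleD (R : comPzRingType) (M : lmodType R) (N : M -> Prop) x y :
  is_submodule N -> N x -> N y -> N (x + y).
Proof.
case=> [N0 NB _] Nx Ny; rewrite -[y]opprK -[- y]sub0r.
by apply: (NB) => //; apply: (NB).
Qed.

Lemma colon_ideal (R : comPzRingType) (I : R -> Prop) b :
  is_ideal I -> is_ideal (colon I b).
Proof.
case=> [I0 IB IM]; split; rewrite /colon.
- by rewrite mul0r.
- by move=> x y Ix Iy; rewrite mulrBl; apply: IB.
- by move=> a x Ix; rewrite -mulrA; apply: IM.
Qed.

(* A Gabriel filter contains every ideal J containing all products r b with
   b in h1 and r in h2, for h1, h2 in the filter: by upward closure each
   colon ideal (J : b) contains h2, then apply the glueing axiom. *)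
Lemma gabriel_products (R : comPzRingType) (F : (R -> Prop) -> Prop)
    (h1 h2 J : R -> Prop) :
  gabriel_filter F -> F h1 -> F h2 -> is_ideal J ->
  (forall b r, h1 b -> h2 r -> J (r * b)) -> F J.
Proof.
case=> [Fid _ Fup _ Fglue] Fh1 Fh2 idJ hJ.
apply: (Fglue h1) => // b h1b.
by apply: (Fup h2) => //; [apply: colon_ideal | move=> r; apply: hJ].
Qed.

Lemma span_prefix_submodule (R : comPzRingType) (M : lmodType R) (s : seq M) n :
  is_submodule (span_prefix s n).
Proof.
split.
- by exists (fun _ => 0); rewrite big1 // => i _; rewrite scale0r.
- move=> _ _ [c ->] [d ->]; exists (fun i => c i - d i).
  by rewrite -sumrB; apply: eq_bigr => i _; rewrite scalerBl.
- move=> a _ [c ->]; exists (fun i => a * c i).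
  by rewrite scaler_sumr; apply: eq_bigr => i _; rewrite scalerA.
Qed.

Lemma span_prefixS (R : comPzRingType) (M : lmodType R) (s : seq M) n y :
  span_prefix s n.+1 y ->
  exists2 p, span_prefix s n p & exists c : R, y = p + c *: s`_n.
Proof.
move=> [c ->]; rewrite big_ord_recr /=.
exists (\sum_(i < n) c (widen_ord (leqnSn n) i) *: s`_i); last by exists (c ord_max).
by exists (fun i => c (widen_ord (leqnSn n) i)).
Qed.

Lemma span_prefix0 (R : comPzRingType) (M : lmodType R) (s : seq M) y :
  span_prefix s 0 y -> y = 0.
Proof. by move=> [c ->]; rewrite big_ord0. Qed.

Section Chain.

Variables (A : comPzRingType) (sigma : htt A) (M : lmodType A).
Variable N : nat -> M -> Prop.
Hypothesis N_sub : forall k, is_submodule (N k).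
Hypothesis N_dec : forall k x, N k.+1 x -> N k x.

Lemma chain_mono k l x : (k <= l)%N -> N l x -> N k x.
Proof.
move=> /subnK <-; elim: (l - k)%N => [|d IH] //= Nx.
by apply: IH; apply: N_dec; rewrite addSn in Nx.
Qed.

Lemma stab_ideal_ideal m : is_ideal (stab_ideal N m).
Proof.
split.
- by move=> t _ y _; rewrite scale0r; case: (N_sub t).
- move=> a b Ha Hb t Ht y Ny; rewrite scalerBl.
  by case: (N_sub t) => [_ NB _]; apply: (NB); [apply: Ha | apply: Hb].
- move=> a r Hr t Ht y Ny; rewrite -scalerA.
  by case: (N_sub t) => [_ _ NZ]; apply: (NZ); apply: Hr.
Qed.

Lemma stabilizes_stab_ideal m :
  Lsigma sigma (stab_ideal N m) -> stabilizes sigma N.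
Proof. by move=> Lm; exists m, (stab_ideal N m) => // t mt y r Ny Jr; apply: Jr. Qed.

Lemma stabilizes_zero :
  (forall k y, N k y -> y = 0) -> stabilizes sigma N.
Proof.
move=> N0; exists 0%N; first exists (fun _ => True) => //.
  by case: (Lsigma_gabriel sigma).
by move=> t _ y a /N0 -> _; rewrite scaler0; case: (N_sub t).
Qed.

Section Extension.

Variables (P : M -> Prop) (x0 : M).
Hypothesis P_sub : is_submodule P.

Definition trace_chain k y : Prop := N k y /\ P y.

Definition coef_chain k (c : A^o) : Prop := exists2 p, P p & N k (p + c *: x0).

Lemma trace_chain_sub k : is_submodule (trace_chain k).
Proof.
case: (N_sub k) (P_sub) => [N0 NB NZ] [P0 PB PZ].
split; first by [].
- by move=> x y [Nx Px] [Ny Py]; split; [apply: (NB) | apply: (PB)].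
- by move=> a x [Nx Px]; split; [apply: (NZ) | apply: (PZ)].
Qed.

Lemma trace_chain_dec k x : trace_chain k.+1 x -> trace_chain k x.
Proof. by move=> [/N_dec]. Qed.

Lemma coef_chain_sub k : is_submodule (coef_chain k).
Proof.
case: (N_sub k) (P_sub) => [N0 NB NZ] [P0 PB PZ]; split.
- by exists 0; rewrite ?scale0r ?addr0.
- move=> c d [p Pp Np] [q Pq Nq]; exists (p - q); first exact: PB.
  have -> : p - q + (c - d) *: x0 = (p + c *: x0) - (q + d *: x0).
    by rewrite scalerBl opprD addrACA.
  exact: NB.
- move=> a c [p Pp Np]; exists (a *: p); first exact: PZ.
  by rewrite -scalerA -scalerDr; apply: (NZ).
Qed.

Lemma coef_chain_dec k c : coef_chain k.+1 c -> coef_chain k c.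
Proof. by move=> [p Pp /N_dec Np]; exists p. Qed.

Hypothesis N_in : forall k y, N k y -> exists2 p, P p & exists c : A, y = p + c *: x0.

(* Write y in N m as
   p + c x0; since c lies in the coefficient ideal at step m2, r c x0 is
   congruent to an element z of N t modulo P, and r y - z lies in the trace
   at step m1, which b carries into N t. *)
Lemma stab_ideal_products m1 m2 (h1 h2 : A -> Prop) :
  (forall t, (m1 <= t)%N -> mul_sub (trace_chain m1) h1 (trace_chain t)) ->
  (forall t, (m2 <= t)%N -> mul_sub (coef_chain m2) h2 (coef_chain t)) ->
  forall b r, h1 b -> h2 r -> stab_ideal N (maxn m1 m2) (r * b).
Proof.
move=> H1 H2 b r h1b h2r t mt y Ny.
have m1t : (m1 <= t)%N by apply: leq_trans mt; apply: leq_maxl.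
have m2t : (m2 <= t)%N by apply: leq_trans mt; apply: leq_maxr.
have [p Pp [c Ey]] := N_in Ny.
have coef_c : coef_chain m2 c.
  by exists p => //; rewrite -Ey; apply: chain_mono Ny; apply: leq_maxr.
have [q Pq Nz] := H2 t m2t c r coef_c h2r.
set z := q + _ in Nz.
have trace_diff : trace_chain m1 (r *: y - z).
  case: (N_sub m1) (P_sub) => [_ NB NZ] [_ PB PZ]; split.
    apply: (NB); last exact: chain_mono Nz.
    by apply: (NZ); apply: chain_mono Ny; apply: leq_maxl.
  have -> : r *: y - z = r *: p - q.
    by rewrite Ey /z scalerDr scalerA opprD addrACA subrr addr0.
  by apply: (PB) => //; apply: (PZ).
have [Nbd _] := H1 t m1t _ b trace_diff h1b.
have -> : (r * b) *: y = b *: (r *: y - z) + b *: z.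
  by rewrite -scalerDr subrK scalerA mulrC.
by apply: submoduleD => //; case: (N_sub t) => [_ _ NZ]; apply: (NZ).
Qed.

Lemma stabilizes_extension :
  stabilizes sigma trace_chain -> stabilizes sigma coef_chain ->
  stabilizes sigma N.
Proof.
move=> [m1 [h1 Lh1 H1]] [m2 [h2 Lh2 H2]].
apply: (@stabilizes_stab_ideal (maxn m1 m2)).
apply: (gabriel_products (Lsigma_gabriel sigma) Lh1 Lh2).
  exact: stab_ideal_ideal.
exact: stab_ideal_products.
Qed.

End Extension.
End Chain.

Lemma stabilizes_in_span (A : comPzRingType) (sigma : htt A) :
  totally_sigma_artinian_ring sigma ->
  forall (M : lmodType A) (s : seq M) n (N : nat -> M -> Prop),
    (forall k, is_submodule (N k)) ->
    (forall k x, N k.+1 x -> N k x) ->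
    (forall k y, N k y -> span_prefix s n y) ->
    stabilizes sigma N.
Proof.
move=> tsaA M s; elim=> [|n IH] N N_sub N_dec N_span.
  by apply: stabilizes_zero => // k y /N_span /span_prefix0.
have N_in k y : N k y ->
    exists2 p, span_prefix s n p & exists c : A, y = p + c *: s`_n.
  by move/N_span; apply: span_prefixS.
have span_sub := span_prefix_submodule s n.
apply: (stabilizes_extension N_sub N_dec span_sub N_in).
  apply: IH; first exact: trace_chain_sub span_sub.
    exact: trace_chain_dec.
  by move=> k y [].
apply: tsaA; first exact: coef_chain_sub span_sub.
exact: coef_chain_dec.
Qed.

Theorem mainTheorem12 (A : comPzRingType) (sigma : htt A) :
  totally_sigma_artinian_ring sigma ->
  forall M : lmodType A, finitely_generated M -> totally_sigma_artinian sigma M.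
Proof.
move=> tsaA M [s gen_s] N N_sub N_dec.
by apply: (stabilizes_in_span tsaA (n := size s)) => // k y _; apply: gen_s.
Qed.
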